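(* Let $(X,\mathcal{C})$ be a separable convexity space with Radon number at most $r$, let $E$ be a non-empty finite set, and let $m\ge 2$ be an integer. For any family of functions $f_1,\dots,f_m$ with $f_i:E\to X$ and $\bigcap_{i=1}^m\mathrm{conv}(f_i(E))=\emptyset$, there exist a subset $E_0\subset E$ with $|E_0|\ge\frac{1}{r-1}|E|$, indices $i,j$, and a halfspace $\gamma\in\mathcal{C}$ such that $f_i(E_0)\subset\gamma$ and $f_j(E_0)\subset X\setminus\gamma$.
   Context: A convexity space $(X,\mathcal{C})$ is a non-empty set $X$ with $\mathcal{C}\subset 2^X$ such that: $\emptyset, X\in\mathcal{C}$; $\mathcal{C}$ is closed under intersections of non-empty subfamilies; and $\mathcal{C}$ is closed under unions of non-empty subfamilies totally ordered by inclusion. Members of $\mathcal{C}$ are convex sets; $\mathrm{conv}(Y)$ is the intersection of all convex sets containing $Y$. The Radon number is the smallest $n$ such that every $Y\subset X$ with $|Y|=n$ has a partition $Y=A\cup B$ with $\mathrm{conv}(A)\cap\mathrm{conv}(B)\neq\emptyset$. A halfspace is $\gamma\in\mathcal{C}$ with $X\setminus\gamma\in\mathcal{C}$. The space is separable if for every $S\in\mathcal{C}$ and $x\in X\setminus S$ there is a halfspace $\gamma$ with $S\subset\gamma$ and $x\notin\gamma$. *)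

From mathcomp Require Import all_boot.
From mathcomp Require Import boolp classical_sets.
Set Implicit Arguments. Unset Strict Implicit. Unset Printing Implicit Defensive.
Local Open Scope classical_set_scope.

Definition chain_by_inclusion (X : Type) (F : set (set X)) :=
  forall A B, F A -> F B -> A `<=` B \/ B `<=` A.

Definition convexity_space (X : Type) (C : set (set X)) : Prop :=
  [/\ C set0, C setT,
      (forall F : set (set X), F !=set0 -> F `<=` C -> C (\bigcap_(A in F) A))
    & (forall F : set (set X), F !=set0 -> F `<=` C -> chain_by_inclusion F ->
         C (\bigcup_(A in F) A))].

Definition conv (X : Type) (C : set (set X)) (Y : set X) : set X :=
  \bigcap_(A in [set A | C A /\ Y `<=` A]) A.

(* every n-element subset Y of X (given as the image of an injective
   y : 'I_n -> X) has a partition Y = A u B (A = y(P), B = y(complement P))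
   with conv A and conv B intersecting *)
Definition radon_property (X : Type) (C : set (set X)) (n : nat) : Prop :=
  forall y : 'I_n -> X, injective y ->
    exists P : {set 'I_n},
      conv C (y @` [set i | i \in P]) `&` conv C (y @` [set i | i \notin P]) !=set0.

Definition radon_number_le (X : Type) (C : set (set X)) (r : nat) : Prop :=
  exists n, (n <= r)%N /\ radon_property C n.

Definition halfspace (X : Type) (C : set (set X)) (g : set X) : Prop :=
  C g /\ C (~` g).

Definition separable (X : Type) (C : set (set X)) : Prop :=
  forall (S : set X) (x : X), C S -> ~ S x ->
    exists g, halfspace C g /\ S `<=` g /\ ~ g x.

(* Radon's argument bounds the Helly number by r - 1: if every r - 1 members
   of a finite family of convex sets meet, the whole family meets.  Apply this
   to the hulls conv f_j(T) of the large sets T ⊆ E, those with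
   (r - 1) |E \ T| < |E|: any r - 1 of them share a point f_j(e), so they all
   share some x.  Since x misses some conv f_i(E), separation gives a
   halfspace g ⊇ f_i(E) with x ∉ g.  The set E0 of e with f_j(e) ∉ g is then
   large enough, for otherwise its complement would be large and
   x ∈ conv f_j(E \ E0) ⊆ g. *)
From mathcomp Require Import all_boot.
From mathcomp Require Import boolp classical_sets zify.

Lemma leq_card_bigcup {I T : finType} (P : {set I}) (F : I -> {set T}) :
  (#|\bigcup_(i in P) F i| <= \sum_(i in P) #|F i|)%N.
Proof.
elim/big_rec2: _ => [|i U n _ IH]; first by rewrite cards0.
by apply: leq_trans (leq_card_setU _ _).1 _; rewrite leq_add2l.
Qed.

Lemma common_mem_of_sum_cardsC_lt {T : finType} {F : {set {set T}}} :
  (\sum_(A in F) #|~: A| < #|T|)%N ->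
  exists x : T, {in F, forall A : {set T}, x \in A}.
Proof.
move=> sum_lt; set U := (\bigcup_(A in F) ~: A)%SET.
have : (0 < #|~: U|)%N.
  by move: (cardsC U) (leq_card_bigcup F (fun A => ~: A)); rewrite -/U; lia.
case/card_gt0P => x; rewrite inE => xU; exists x => A AF.
by apply: contraNT xU => xA; apply/bigcupP; exists A; rewrite ?inE.
Qed.

Lemma sum_cardsC_lt {T : finType} {s : nat} {F : {set {set T}}} :
  (0 < #|T|)%N -> (#|F| <= s)%N -> {in F, forall A, s * #|~: A| < #|T|}%N ->
  (\sum_(A in F) #|~: A| < #|T|)%N.
Proof.
move=> T_gt0 Fs FA.
have [->|[A0 A0F]] := set_0Vmem F; first by rewrite big_set0.
have s_gt0 : (0 < s)%N by apply: leq_trans Fs; apply/card_gt0P; exists A0.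
rewrite -(ltn_pmul2l s_gt0) big_distrr /=.
apply: (@leq_ltn_trans (\sum_(A in F) #|T|.-1)).
  by apply: leq_sum => A /FA; lia.
rewrite sum_nat_const (leq_ltn_trans (leq_mul Fs (leqnn _))) //.
by rewrite ltn_pmul2l // ltn_predL.
Qed.

Local Open Scope classical_set_scope.

Section ConvexitySpace.
Context {X : Type} {C : set (set X)} (HC : convexity_space C).

Lemma convex_conv Y : C (conv C Y).
Proof.
case: HC => _ CT Ccap _; apply: Ccap; last by move=> A [].
by exists setT; split.
Qed.

Lemma sub_conv Y : Y `<=` conv C Y.
Proof. by move=> y Yy A [_]; apply. Qed.

Lemma conv_sub {Y A : set X} : C A -> Y `<=` A -> conv C Y `<=` A.
Proof. by move=> CA YA y; apply; split. Qed.

Lemma conv_mono {Y Z : set X} : Y `<=` Z -> conv C Y `<=` conv C Z.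
Proof.
move=> YZ; apply: conv_sub; first exact: convex_conv.
exact: subset_trans YZ (@sub_conv Z).
Qed.

Lemma radon_property_le {n k : nat} :
  (n <= k)%N -> radon_property C n -> radon_property C k.
Proof.
move=> nk Rn y y_inj; pose w := widen_ord nk.
have w_inj : injective w by move=> a b /(congr1 val) ab; apply: val_inj.
have [P [p [pP pnP]]] := Rn (y \o w) (fun a b ab => w_inj _ _ (y_inj _ _ ab)).
exists (w @: P), p; split.
- by apply: conv_mono pP => _ [i iP <-]; exists (w i); rewrite //= mem_imset.
- by apply: conv_mono pnP => _ [i iP <-]; exists (w i); rewrite //= mem_imset.
Qed.

Lemma radon_common_point {I : finType} {A : I -> set X} {S : {set I}}
    (x : I -> X) : (forall i, C (A i)) ->
  radon_property C #|S| ->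
  (forall l, l \in S -> {in S :\ l, forall i, A i (x l)}) ->
  exists p, {in S, forall i, A i p}.
Proof.
move=> CA RS xA.
have [[a [b [aS bS ab xab]]]|x_inj] :=
  EM (exists a b, [/\ a \in S, b \in S, a != b & x a = x b]).
  exists (x a) => i iS; have [->|ia] := eqVneq i a.
    by rewrite xab; apply: xA; rewrite // !inE ab.
  by apply: xA; rewrite // !inE ia.
pose y (q : 'I_#|S|) := x (enum_val q).
have y_inj : injective y.
  move=> a b yab; apply: contrapT => /eqP ab; apply: x_inj.
  exists (enum_val a), (enum_val b).
  by rewrite !enum_valP (inj_eq enum_val_inj).
have [P [p [pP pnP]]] := RS y y_inj.
exists p => l lS; pose k := enum_rank_in lS l.
(* [p] lies in the hulls of both halves of the Radon partition, and the half
   avoiding the index [k] of [l] has its hull inside [A l]. *)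
have hull_sub (Q : set 'I_#|S|) : ~ Q k -> conv C (y @` Q) `<=` A l.
  move=> nQk; apply: conv_sub => // _ [q Qq <-]; apply: (xA _ (enum_valP q) l).
  rewrite !inE lS andbT; apply: contraPneq nQk => lq.
  by rewrite /k {2}lq enum_valK_in.
have [kP|kP] := boolP (k \in P).
  by apply: hull_sub pnP => /=; rewrite kP.
by apply: hull_sub pP => /=; apply/negP.
Qed.

Lemma helly {s : nat} {I : finType} {A : I -> set X} (S : {set I}) :
  (forall i, C (A i)) -> radon_property C s.+1 ->
  (forall S0 : {set I}, S0 \subset S -> (#|S0| <= s)%N ->
     exists x, {in S0, forall i, A i x}) ->
  exists x, {in S, forall i, A i x}.
Proof.
move=> CA Rs; have [k leSk] := ubnP #|S|.
elim: k S leSk => // k IHk S leSk meet.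
have [Ss|sS] := leqP #|S| s; first exact: meet S (subxx S) Ss.
have [|x0 _] := meet _ (finset.sub0set S); first by rewrite cards0.
have xP l : exists x, l \in S -> {in S :\ l, forall i, A i x}.
  have [lS|_] := boolP (l \in S); last by exists x0.
  have [||x xA] := IHk (S :\ l); last by exists x.
  - by move: leSk; rewrite (cardsD1 l S) lS.
  - move=> S0 S0S; apply: meet.
    exact: fintype.subset_trans S0S (subsetDl _ _).
have [x xA] := choice xP.
exact: radon_common_point x CA (radon_property_le sS Rs) xA.
Qed.

End ConvexitySpace.

Theorem lemma3p1 (X : Type) (C : set (set X)) (r : nat)
  (HC : convexity_space C) (Hsep : separable C) (Hr : radon_number_le C r)
  (E : finType) (HE : (0 < #|E|)%N) (m : nat) (Hm : (2 <= m)%N)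
  (f : 'I_m -> E -> X)
  (Hempty : \bigcap_(i in [set: 'I_m]) conv C (range (f i)) = set0) :
  exists (E0 : {set E}) (i j : 'I_m) (g : set X),
    [/\ (#|E| <= (r - 1) * #|E0|)%N, halfspace C g,
        f i @` [set e | e \in E0] `<=` g
      & f j @` [set e | e \in E0] `<=` ~` g].
Proof.
pose j : 'I_m := Ordinal (ltnW Hm).
case: Hr => n [nr Rn]; set s := (r - 1)%N.
have Rs : radon_property C s.+1.
  by apply: (radon_property_le HC _ Rn); rewrite /s; lia.
pose large := [set T : {set E} | (s * #|~: T| < #|E|)%N]%SET.
have [x xlarge] : exists x,
    {in large, forall T : {set E}, conv C (f j @` [set e | e \in T]) x}.
  apply: (helly HC large (fun T => convex_conv HC _) Rs) => F Flarge Fs.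
  have [|e eF] := common_mem_of_sum_cardsC_lt (sum_cardsC_lt HE Fs _).
    by move=> T /(fintype.subsetP Flarge); rewrite inE.
  by exists (f j e) => T TF; apply: sub_conv; exists e => //; exact: eF.
have [i nxi] : exists i, ~ conv C (range (f i)) x.
  apply/existsNP => x_hulls; suff : set0 x by [].
  by rewrite -Hempty => i _; exact: x_hulls.
have [g [Cg [fig ngx]]] := Hsep _ x (convex_conv HC _) nxi.
pose E0 := [set e | `[< ~ g (f j e) >]]%SET.
have [E0_big|E0_small] := leqP #|E| (s * #|E0|).
  exists E0, i, j, g; split => //.
  - by move=> _ [e _ <-]; apply: fig; apply: sub_conv; exists e.
  - by move=> _ [e /= E0e <-]; move: E0e; rewrite inE => /asboolP.
have E0C_large : ~: E0 \in large by rewrite inE finset.setCK.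
exfalso; apply/ngx/(conv_sub Cg.1 _ _ (xlarge _ E0C_large)).
move=> _ [e /= E0Ce <-]; apply: contrapT.
by move: E0Ce; rewrite !inE => /asboolPn.
Qed.
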